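(* Let $k\ge 3$, $F$ a field, $\Phi\le F^*$ a subgroup of order $k$ with generator $\varphi$, and suppose $(F,\Phi)$ is circular. Then the group $\mathcal{G}_1$ maps $\mathcal{O}_\varphi(F,k)$ into itself (so acts on it). If moreover $k$ is even, then $\mathcal{G}_0$ acts on $\mathcal{O}_\varphi(F,k)$.
   Context: $\mathbf{k}=\{1,\dots,k-1\}$, $\mathbf{k}_0=\{0,\dots,k-1\}$. $(F,\Phi)$ is circular if $|(\Phi a+b)\cap\Phi c|\le2$ for all $a,b,c\in F^*$, with $\Phi a+b=\{\lambda a+b:\lambda\in\Phi\}$. A quadruple $(i,j\mid s,t)\in\mathbf{k}^4$ with $i\ne s$ is an overlap (w.r.t. $\varphi$) if $\varphi^\omega(\varphi^j-1)(\varphi^s-1)=(\varphi^i-1)(\varphi^t-1)$ for some $\omega\in\mathbf{k}_0$; it is trivial if one of $i\equiv\pm j$, $j\equiv\pm t$, $t\equiv\pm s$, $s\equiv\pm i\pmod k$ holds, nontrivial otherwise; $\mathcal{O}_\varphi(F,k)$ is the set of nontrivial overlaps. Groups acting on $\mathbf{k}^4$ (quadruples written $(i,j\mid s,t)$): for $m=1,2,3,4$, $\kappa_m$ replaces the $m$-th entry $u$ by $k-u$. Let $D_4$ be the group of coordinate permutations generated by the transpositions $(i,t)$, $(j,s)$ and the double transposition $(i,j)(s,t)$ (a dihedral group of order 8, consisting of the identity and $(i,t),(j,s),(i,t)(j,s),(i,s)(j,t),(i,j)(s,t),(i,j,t,s),(i,s,t,j)$). $\mathcal{G}_0$ is the group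 generated by $\kappa_1,\dots,\kappa_4$ and $D_4$; $\mathcal{G}_1$ is the group generated by $\kappa_1\kappa_4,\kappa_2\kappa_4,\kappa_3\kappa_4$ and $D_4$. *)

From HB Require Import structures.
From mathcomp Require Import all_boot all_order all_algebra.
Set Implicit Arguments. Unset Strict Implicit. Unset Printing Implicit Defensive.
Import Order.TTheory GRing.Theory Num.Theory.
Local Open Scope ring_scope.

Definition Phi (F : fieldType) (phi : F) (k : nat) : seq F :=
  [seq phi ^+ i | i <- iota 0 k].

Definition circular (F : fieldType) (phi : F) (k : nat) : Prop :=
  forall a b c : F, a != 0 -> b != 0 -> c != 0 ->
    let PhiAb := [seq l * a + b | l <- Phi phi k] in
    let PhiC := [seq m * c | m <- Phi phi k] in
    (size (undup [seq x <- PhiAb | x \in PhiC]) <= 2)%N.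

Record quad := Quad { qi : nat; qj : nat; qs : nat; qt : nat }.

Definition in_k (k u : nat) : bool := (0 < u)%N && (u < k)%N.

Definition is_overlap (F : fieldType) (phi : F) (k : nat) (q : quad) : Prop :=
  [/\ in_k k (qi q), in_k k (qj q), in_k k (qs q), in_k k (qt q)
    & qi q != qs q] /\
  exists w : nat, (w < k)%N /\
    phi ^+ w * (phi ^+ qj q - 1) * (phi ^+ qs q - 1) =
    (phi ^+ qi q - 1) * (phi ^+ qt q - 1).

Definition pm_cong (k u v : nat) : bool :=
  (u == v %[mod k])%N || ((u + v) %% k == 0)%N.

Definition trivial_quad (k : nat) (q : quad) : bool :=
  [|| pm_cong k (qi q) (qj q), pm_cong k (qj q) (qt q),
      pm_cong k (qt q) (qs q) | pm_cong k (qs q) (qi q)].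

Definition in_O (F : fieldType) (phi : F) (k : nat) (q : quad) : Prop :=
  is_overlap phi k q /\ ~~ trivial_quad k q.

Definition kappa1 (k : nat) (q : quad) := Quad (k - qi q) (qj q) (qs q) (qt q).
Definition kappa2 (k : nat) (q : quad) := Quad (qi q) (k - qj q) (qs q) (qt q).
Definition kappa3 (k : nat) (q : quad) := Quad (qi q) (qj q) (k - qs q) (qt q).
Definition kappa4 (k : nat) (q : quad) := Quad (qi q) (qj q) (qs q) (k - qt q).

Definition swap_it (q : quad) := Quad (qt q) (qj q) (qs q) (qi q).
Definition swap_js (q : quad) := Quad (qi q) (qs q) (qj q) (qt q).
Definition swap_ij_st (q : quad) := Quad (qj q) (qi q) (qt q) (qs q).

Inductive generated (gens : (quad -> quad) -> Prop) : (quad -> quad) -> Prop :=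
  | gen_id : generated gens id
  | gen_base g : gens g -> generated gens g
  | gen_comp g h : generated gens g -> generated gens h ->
                   generated gens (fun q => g (h q)).

Definition gens_D4 (g : quad -> quad) : Prop :=
  g = swap_it \/ g = swap_js \/ g = swap_ij_st.

Definition gens_G0 (k : nat) (g : quad -> quad) : Prop :=
  g = kappa1 k \/ g = kappa2 k \/ g = kappa3 k \/ g = kappa4 k \/ gens_D4 g.

Definition gens_G1 (k : nat) (g : quad -> quad) : Prop :=
  g = (fun q => kappa1 k (kappa4 k q)) \/
  g = (fun q => kappa2 k (kappa4 k q)) \/
  g = (fun q => kappa3 k (kappa4 k q)) \/ gens_D4 g.

Definition G0 (k : nat) := generated (gens_G0 k).
Definition G1 (k : nat) := generated (gens_G1 k).

From HB Require Import structures.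
From mathcomp Require Import all_boot all_order all_algebra.
From mathcomp Require Import zify ring.
Import GRing.Theory.
Local Open Scope ring_scope.

(* Proof of lemma16.
   Write d u := phi^u - 1 and call x, y in F associate, x ~ y, when
   phi^n * x = y for some n.  Since phi^k = 1, ~ is an equivalence
   compatible with products and signs, and the overlap equation
   of (i,j|s,t) reads  d j * d s ~ d i * d t.  The whole proof rests on the
   reflection identity  d (k - u) ~ - d u.
   - Index side: flipping an entry u into k - u preserves [1, k-1] and the
     relation u = +-v (mod k); the four triviality conditions are the edges of
     the 4-cycle i - j - t - s - i, which D_4 permutes.  So every generator
     preserves the index conditions and (non)triviality.
   - Equation side: D_4 only permutes/commutes factors or swaps the two sides
     of ~.  The generators kappa_m kappa_4 of G_1 flip one factor on each side,
     so the two signs -1 cancel.  When k is even, phi^(k/2) = -1, hence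
     x ~ -x and every single kappa_m preserves the equation. *)

Lemma generated_preserves (P : quad -> Prop) (gens : (quad -> quad) -> Prop) :
  (forall g, gens g -> forall q, P q -> P (g q)) ->
  forall g, generated gens g -> forall q, P q -> P (g q).
Proof. by move=> Hgens g; elim=> //= g1 g2 _ IH1 _ IH2 q Pq; apply/IH1/IH2. Qed.

Definition in_k4 (k : nat) (q : quad) : bool :=
  [&& in_k k (qi q), in_k k (qj q), in_k k (qs q) & in_k k (qt q)].

Definition index_stable (k : nat) (g : quad -> quad) : Prop :=
  forall q, in_k4 k q -> in_k4 k (g q) /\ trivial_quad k (g q) = trivial_quad k q.

Section IndexData.
Context {k : nat}.

Lemma in_k_le u : in_k k u -> (u <= k)%N.
Proof. by case/andP=> _ /ltnW. Qed.

Lemma in_k_flip u : in_k k u -> in_k k (k - u).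
Proof. by rewrite /in_k => /andP[? ?]; apply/andP; split; lia. Qed.

Lemma pm_congE u v : in_k k u -> in_k k v ->
  pm_cong k u v = (u == v) || (u + v == k)%N.
Proof.
rewrite /in_k /pm_cong => /andP[u0 uk] /andP[v0 vk].
rewrite (modn_small uk) (modn_small vk).
case: (ltnP (u + v) k) => uvk.
  by rewrite (modn_small uvk); congr (_ || _); apply/eqP/eqP; lia.
have -> : (u + v = (u + v - k) + k)%N by lia.
by rewrite modnDr modn_small; [congr (_ || _); apply/eqP/eqP | ]; lia.
Qed.

Lemma pm_congC u v : pm_cong k u v = pm_cong k v u.
Proof. by rewrite /pm_cong eq_sym addnC. Qed.

Lemma pm_cong_flip u v : in_k k u -> in_k k v ->
  pm_cong k (k - u) v = pm_cong k u v.
Proof.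
move=> ku kv; rewrite !pm_congE ?in_k_flip //.
by move: ku kv; rewrite /in_k => /andP[? ?] /andP[? ?]; apply/idP/idP; lia.
Qed.

Lemma index_stable_comp {g h : quad -> quad} : index_stable k g -> index_stable k h ->
  index_stable k (fun q => g (h q)).
Proof. by move=> sg sh q /sh[/sg[kghq ->] ->]. Qed.

(* The triviality conditions are the edges i-j, j-t, t-s, s-i of a 4-cycle,
   which D_4 permutes; pm_cong is symmetric. *)
Lemma index_stable_swap_it : index_stable k swap_it.
Proof.
move=> [i j s t]; rewrite /in_k4 /= => /and4P[ki kj ks kt]; rewrite ki kj ks kt; split=> //.
rewrite /trivial_quad /= (pm_congC t j) (pm_congC j i) (pm_congC i s) (pm_congC s t).
by case: (pm_cong k i j) (pm_cong k j t) (pm_cong k t s) (pm_cong k s i) => [] [] [] [].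
Qed.

Lemma index_stable_swap_js : index_stable k swap_js.
Proof.
move=> [i j s t]; rewrite /in_k4 /= => /and4P[ki kj ks kt]; rewrite ki kj ks kt; split=> //.
rewrite /trivial_quad /= (pm_congC i s) (pm_congC s t) (pm_congC t j) (pm_congC j i).
by case: (pm_cong k i j) (pm_cong k j t) (pm_cong k t s) (pm_cong k s i) => [] [] [] [].
Qed.

Lemma index_stable_swap_ij_st : index_stable k swap_ij_st.
Proof.
move=> [i j s t]; rewrite /in_k4 /= => /and4P[ki kj ks kt]; rewrite ki kj ks kt; split=> //.
rewrite /trivial_quad /= (pm_congC j i) (pm_congC i s) (pm_congC s t) (pm_congC t j).
by case: (pm_cong k i j) (pm_cong k j t) (pm_cong k t s) (pm_cong k s i) => [] [] [] [].
Qed.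

Lemma index_stable_kappa1 : index_stable k (kappa1 k).
Proof.
move=> [i j s t]; rewrite /in_k4 /= => /and4P[ki kj ks kt]; rewrite in_k_flip ?ki ?kj ?ks ?kt //.
split=> //; rewrite /trivial_quad /= !pm_cong_flip //.
by rewrite ![pm_cong k s _]pm_congC pm_cong_flip.
Qed.

Lemma index_stable_kappa2 : index_stable k (kappa2 k).
Proof.
move=> [i j s t]; rewrite /in_k4 /= => /and4P[ki kj ks kt]; rewrite in_k_flip ?ki ?kj ?ks ?kt //.
split=> //; rewrite /trivial_quad /= !pm_cong_flip //.
by rewrite ![pm_cong k i _]pm_congC pm_cong_flip.
Qed.

Lemma index_stable_kappa3 : index_stable k (kappa3 k).
Proof.
move=> [i j s t]; rewrite /in_k4 /= => /and4P[ki kj ks kt]; rewrite in_k_flip ?ki ?kj ?ks ?kt //.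
split=> //; rewrite /trivial_quad /= !pm_cong_flip //.
by rewrite ![pm_cong k t _]pm_congC pm_cong_flip.
Qed.

Lemma index_stable_kappa4 : index_stable k (kappa4 k).
Proof.
move=> [i j s t]; rewrite /in_k4 /= => /and4P[ki kj ks kt]; rewrite in_k_flip ?ki ?kj ?ks ?kt //.
split=> //; rewrite /trivial_quad /= !pm_cong_flip //.
by rewrite ![pm_cong k j _]pm_congC pm_cong_flip.
Qed.

End IndexData.

(* For even k, the primitive k-th root phi satisfies phi^(k/2) = -1:
   its square is 1 and it is not 1 since 0 < k/2 < k. *)
Lemma prim_root_half {F : fieldType} {phi : F} {k : nat} :
  k.-primitive_root phi -> ~~ odd k -> phi ^+ k./2 = -1.
Proof.
move=> prim even_k; have k_gt0 := prim_order_gt0 prim.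
have k_eq : k = (k./2 + k./2)%N.
  by rewrite addnn -[LHS](odd_double_half k) (negbTE even_k).
have half_neq1 : phi ^+ k./2 != 1.
  by rewrite -(prim_order_dvd prim); apply/negP => /dvdn_leq; lia.
have : (phi ^+ k./2) ^+ 2 == 1 by rewrite -exprM muln2 -addnn -k_eq prim_expr_order.
by rewrite sqrf_eq1 (negbTE half_neq1) => /eqP.
Qed.

Section Overlaps.
Context {F : fieldType} {phi : F} {k : nat}.
Hypotheses (k_gt0 : (0 < k)%N) (phik : phi ^+ k = 1).

Local Notation d u := (phi ^+ u - 1).

Definition assoc (x y : F) : Prop := exists n, phi ^+ n * x = y.

Lemma assoc_refl x : assoc x x.
Proof. by exists 0%N; rewrite mul1r. Qed.

Lemma assoc_trans {x y z : F} : assoc x y -> assoc y z -> assoc x z.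
Proof. by move=> [m <-] [n <-]; exists (n + m)%N; rewrite exprD mulrA. Qed.

(* ~ is symmetric: phi^n is inverted by phi^((k-1) n), as phi^k = 1. *)
Lemma assoc_sym {x y : F} : assoc x y -> assoc y x.
Proof.
move=> [n <-]; exists ((k - 1) * n)%N.
by rewrite mulrA -exprD -mulSnr subn1 prednK // exprM phik expr1n mul1r.
Qed.

Lemma assocM {x1 y1 x2 y2 : F} : assoc x1 y1 -> assoc x2 y2 -> assoc (x1 * x2) (y1 * y2).
Proof.
by move=> [m <-] [n <-]; exists (m + n)%N; rewrite exprD; ring.
Qed.

Lemma assocN {x y : F} : assoc x y -> assoc (- x) (- y).
Proof. by move=> [n <-]; exists n; rewrite mulrN. Qed.

(* The reflection identity d (k - u) = phi^(k-u) * (- d u). *)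
Lemma assoc_reflect {u : nat} : (u <= k)%N -> assoc (- d u) (d (k - u)).
Proof.
by move=> uk; exists (k - u)%N; rewrite mulrN mulrBr -exprD subnK // phik mulr1 opprB.
Qed.

(* With phi^k = 1, the exponent w < k of an overlap may be any natural. *)
Lemma overlap_eqE (i j s t : nat) :
  (exists w, (w < k)%N /\ phi ^+ w * d j * d s = d i * d t) <->
  assoc (d j * d s) (d i * d t).
Proof.
split=> [[w [_ <-]]|[n <-]]; first by exists w; rewrite mulrA.
by exists (n %% k)%N; rewrite ltn_mod k_gt0 (expr_mod _ phik) mulrA.
Qed.

Definition overlap_rel (q : quad) : Prop :=
  assoc (d (qj q) * d (qs q)) (d (qi q) * d (qt q)).

Lemma in_OE q :
  in_O phi k q <-> [/\ in_k4 k q, ~~ trivial_quad k q & overlap_rel q].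
Proof.
rewrite /in_O /is_overlap /in_k4 /overlap_rel.
split=> [[[[ki kj ks kt _] /overlap_eqE ov] nt] | [/and4P[ki kj ks kt] nt ov]].
  by split=> //; apply/and4P.
split=> //; split; last exact/overlap_eqE.
split=> //; apply: contraNneq nt; rewrite /trivial_quad /pm_cong => ->.
by rewrite eqxx !orbT.
Qed.

Lemma in_O_map {g : quad -> quad} : index_stable k g ->
  (forall q, in_k4 k q -> overlap_rel q -> overlap_rel (g q)) ->
  forall q, in_O phi k q -> in_O phi k (g q).
Proof.
move=> stable_g ov_g q /in_OE[kq nt ov]; have [kgq triv_g] := stable_g q kq.
by apply/in_OE; split; [| rewrite triv_g | apply: ov_g].
Qed.

Lemma in_O_swap_it q : in_O phi k q -> in_O phi k (swap_it q).
Proof.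
apply: in_O_map index_stable_swap_it _ q => -[i j s t] _.
by rewrite /overlap_rel /= [d t * _]mulrC.
Qed.

Lemma in_O_swap_js q : in_O phi k q -> in_O phi k (swap_js q).
Proof.
apply: in_O_map index_stable_swap_js _ q => -[i j s t] _.
by rewrite /overlap_rel /= [d s * _]mulrC.
Qed.

Lemma in_O_swap_ij_st q : in_O phi k q -> in_O phi k (swap_ij_st q).
Proof.
apply: in_O_map index_stable_swap_ij_st _ q => -[i j s t] _.
exact: assoc_sym.
Qed.

Lemma in_O_D4 g : gens_D4 g -> forall q, in_O phi k q -> in_O phi k (g q).
Proof.
by case=> [|[]] ->; [exact: in_O_swap_it | exact: in_O_swap_js | exact: in_O_swap_ij_st].
Qed.

(* kappa_1 kappa_4 flips one factor of the right-hand side twice over. *)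
Lemma in_O_kappa14 q : in_O phi k q -> in_O phi k (kappa1 k (kappa4 k q)).
Proof.
apply: in_O_map (index_stable_comp index_stable_kappa1 index_stable_kappa4) _ q.
move=> [i j s t]; rewrite /in_k4 /overlap_rel /= => /and4P[/in_k_le ki _ _ /in_k_le kt] ov.
apply: (assoc_trans ov); rewrite -mulrNN.
by apply: assocM; exact: assoc_reflect.
Qed.

(* kappa_m kappa_4 (m = 2, 3) flips one factor on each side: both sides
   change sign. *)
Lemma in_O_kappa24 q : in_O phi k q -> in_O phi k (kappa2 k (kappa4 k q)).
Proof.
apply: in_O_map (index_stable_comp index_stable_kappa2 index_stable_kappa4) _ q.
move=> [i j s t]; rewrite /in_k4 /overlap_rel /= => /and4P[_ /in_k_le kj _ /in_k_le kt] ov.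
have lhs : assoc (d (k - j) * d s) (- (d j * d s)).
  rewrite -mulNr; apply: assocM (assoc_refl _).
  by apply: assoc_sym _; exact: assoc_reflect.
have rhs : assoc (- (d i * d t)) (d i * d (k - t)).
  by rewrite -mulrN; apply: assocM (assoc_refl _) _; exact: assoc_reflect.
exact: assoc_trans lhs (assoc_trans (assocN ov) rhs).
Qed.

Lemma in_O_kappa34 q : in_O phi k q -> in_O phi k (kappa3 k (kappa4 k q)).
Proof.
apply: in_O_map (index_stable_comp index_stable_kappa3 index_stable_kappa4) _ q.
move=> [i j s t]; rewrite /in_k4 /overlap_rel /= => /and4P[_ _ /in_k_le ks /in_k_le kt] ov.
have lhs : assoc (d j * d (k - s)) (- (d j * d s)).
  rewrite -mulrN; apply: assocM (assoc_refl _) _.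
  by apply: assoc_sym _; exact: assoc_reflect.
have rhs : assoc (- (d i * d t)) (d i * d (k - t)).
  by rewrite -mulrN; apply: assocM (assoc_refl _) _; exact: assoc_reflect.
exact: assoc_trans lhs (assoc_trans (assocN ov) rhs).
Qed.

Lemma in_O_G1gens g : gens_G1 k g -> forall q, in_O phi k q -> in_O phi k (g q).
Proof.
case=> [->|[->|[->|/in_O_D4 //]]];
  [exact: in_O_kappa14 | exact: in_O_kappa24 | exact: in_O_kappa34].
Qed.

(* If -1 is a power of phi (as for even k), signs are irrelevant and every
   single flip preserves the overlap equation. *)
Section MinusOnePower.
Context {h : nat}.
Hypothesis phih : phi ^+ h = -1.

Lemma assoc_opp x : assoc x (- x).
Proof. by exists h; rewrite phih mulN1r. Qed.

Lemma assoc_flip {u : nat} : in_k k u -> assoc (d u) (d (k - u)).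
Proof. by move=> /in_k_le ku; apply: assoc_trans (assoc_opp _) (assoc_reflect ku). Qed.

Lemma in_O_kappa1 q : in_O phi k q -> in_O phi k (kappa1 k q).
Proof.
apply: in_O_map index_stable_kappa1 _ q.
move=> [i j s t]; rewrite /in_k4 /overlap_rel /= => /and4P[ki _ _ _] ov.
by apply: assoc_trans ov (assocM (assoc_flip ki) (assoc_refl _)).
Qed.

Lemma in_O_kappa2 q : in_O phi k q -> in_O phi k (kappa2 k q).
Proof.
apply: in_O_map index_stable_kappa2 _ q.
move=> [i j s t]; rewrite /in_k4 /overlap_rel /= => /and4P[_ kj _ _] ov.
by apply: assoc_trans (assocM (assoc_sym (assoc_flip kj)) (assoc_refl _)) ov.
Qed.

Lemma in_O_kappa3 q : in_O phi k q -> in_O phi k (kappa3 k q).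
Proof.
apply: in_O_map index_stable_kappa3 _ q.
move=> [i j s t]; rewrite /in_k4 /overlap_rel /= => /and4P[_ _ ks _] ov.
by apply: assoc_trans (assocM (assoc_refl _) (assoc_sym (assoc_flip ks))) ov.
Qed.

Lemma in_O_kappa4 q : in_O phi k q -> in_O phi k (kappa4 k q).
Proof.
apply: in_O_map index_stable_kappa4 _ q.
move=> [i j s t]; rewrite /in_k4 /overlap_rel /= => /and4P[_ _ _ kt] ov.
by apply: assoc_trans ov (assocM (assoc_refl _) (assoc_flip kt)).
Qed.

Lemma in_O_G0gens g : gens_G0 k g -> forall q, in_O phi k q -> in_O phi k (g q).
Proof.
case=> [->|[->|[->|[->|/in_O_D4 //]]]];
  [exact: in_O_kappa1 | exact: in_O_kappa2 | exact: in_O_kappa3 | exact: in_O_kappa4].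
Qed.

End MinusOnePower.
End Overlaps.

Theorem lemma16 (k : nat) (F : fieldType) (phi : F) :
  (3 <= k)%N ->
  (k.-primitive_root phi)%R ->
  circular phi k ->
  (forall g, G1 k g -> forall q, in_O phi k q -> in_O phi k (g q)) /\
  (~~ odd k -> forall g, G0 k g -> forall q, in_O phi k q -> in_O phi k (g q)).
Proof.
move=> _ prim _; have k_gt0 := prim_order_gt0 prim.
have phik := prim_expr_order prim.
split; first exact: generated_preserves (in_O_G1gens k_gt0 phik).
move=> even_k; have phi_half := prim_root_half prim even_k.
exact: generated_preserves (in_O_G0gens k_gt0 phik phi_half).
Qed.
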